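(* No semisimple representation $\Gamma\to\mathrm{SL}_4\mathbb{R}$ is irreducible. More precisely, every semisimple representation $\rho:\Gamma\to\mathrm{SL}_4\mathbb{R}$ preserves a line or a plane of $\mathbb{R}^4$, and $$X(\Gamma,\mathrm{SL}_4\mathbb{R})=i_*\big(\mathrm{Rep}^{SS}(\Gamma,\mathrm{SL}_3\mathbb{R})\big)/\mathrm{SL}_4\mathbb{R}\ \cup\ j_*\big(\mathrm{Rep}^{SS}(\Gamma,\mathrm{SL}_2\mathbb{R}\times\mathrm{SL}_2\mathbb{R})\big)/\mathrm{SL}_4\mathbb{R},$$ i.e. every semisimple representation is conjugate either to $\rho'\oplus 1$ with $\rho':\Gamma\to\mathrm{SL}_3\mathbb{R}$ semisimple, or to $\rho_1\oplus\rho_2$ with $\rho_1,\rho_2:\Gamma\to\mathrm{SL}_2\mathbb{R}$ semisimple.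
   Context: $\Gamma=\langle a,b\mid a^3=b^3=(ab)^3=1\rangle$ is the orbifold fundamental group of $S^2(3,3,3)$. $\mathrm{Rep}^{SS}(\Gamma,H)$ denotes semisimple representations $\Gamma\to H$; $i:\mathrm{SL}_3\mathbb{R}\hookrightarrow\mathrm{SL}_4\mathbb{R}$, $A\mapsto A\oplus 1$, and $j:\mathrm{SL}_2\mathbb{R}\times\mathrm{SL}_2\mathbb{R}\hookrightarrow\mathrm{SL}_4\mathbb{R}$, $(A,B)\mapsto A\oplus B$, are the natural inclusions and the star denotes postcomposition. $X(\Gamma,\mathrm{SL}_4\mathbb{R})$ is the real GIT quotient, identified with $\mathrm{Rep}^{SS}(\Gamma,\mathrm{SL}_4\mathbb{R})/\mathrm{SL}_4\mathbb{R}$. *)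

From HB Require Import structures.
From mathcomp Require Export all_boot all_order all_algebra.
From mathcomp Require Export reals.
Set Implicit Arguments. Unset Strict Implicit. Unset Printing Implicit Defensive.
Import Order.TTheory GRing.Theory Num.Theory.
Local Open Scope ring_scope.

(* Matrices act on COLUMN vectors of R^n (v |-> M *m v).  A linear subspace
   of R^n is encoded (mxalgebra style) as the row space of a matrix U whose
   rows are (transposed) vectors.  U is stable under M iff M u lies in U for
   every u in U, i.e. (U *m M^T <= U)%MS. *)
Definition col_stable (R : fieldType) (n : nat) (M U : 'M[R]_n) : bool :=
  (U *m M^T <= U)%MS.

Definition invariant (R : fieldType) (n : nat) (gs : seq 'M[R]_n) (U : 'M[R]_n) : bool :=
  all (fun M => col_stable M U) gs.

Definition semisimple (R : fieldType) (n : nat) (gs : seq 'M[R]_n) : Prop :=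
  forall U : 'M[R]_n, invariant gs U ->
    exists V : 'M[R]_n, invariant gs V /\
      (U :&: V == (0 : 'M[R]_n))%MS /\ (U + V == 1%:M)%MS.

(* A representation Gamma -> SL_n(R), Gamma = <a,b | a^3 = b^3 = (ab)^3 = 1>,
   is the same as the pair (A, B) = (rho a, rho b) of matrices of determinant
   1 satisfying the defining relations. *)
Definition cube (R : pzRingType) (n : nat) (M : 'M[R]_n) : 'M[R]_n := M *m M *m M.

Definition rep_SL (R : comPzRingType) (n : nat) (A B : 'M[R]_n) : Prop :=
  [/\ \det A = 1, \det B = 1, cube A = 1%:M, cube B = 1%:M & cube (A *m B) = 1%:M].

Definition incl_i (R : pzRingType) (M : 'M[R]_3) : 'M[R]_4 :=
  block_mx M 0 0 (1%:M : 'M[R]_1).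

Definition incl_j (R : pzRingType) (M N : 'M[R]_2) : 'M[R]_4 :=
  block_mx M 0 0 N.

From mathcomp Require Import complex ring zify.
Import Order.TTheory GRing.Theory Num.Theory.
Local Open Scope ring_scope.
Set Implicit Arguments. Unset Strict Implicit. Unset Printing Implicit Defensive.

(* Over C, a matrix M with M^3 = 1 is diagonalisable with eigenvalues among 1, w, w^2,
   w a primitive cube root of unity, so the fixed spaces of M, w M and w^2 M span C^n.
   Applied to A, B and BA in dimension 4, a counting argument modulo 3 gives i, j such
   that the fixed spaces of w^i A, w^j B and w^(i+j) BA have total dimension > 4; for
   two matrices A', B' with A'^3 = 1 this forces a common fixed row or column vector,
   i.e. a common complex eigenvector of A, B or of their transposes.  Its real and
   imaginary parts span a real invariant subspace of dimension 1 or 2, or cut out one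
   of dimension 2 or 3.  Semisimplicity provides an invariant complement; in a basis
   adapted to the splitting the representation is block diagonal of type 3+1 or 2+2,
   and the 1x1 block is a real cube root of 1, hence 1. *)

Section Complements.
Variable F : fieldType.

Lemma invariant2E n (M1 M2 U : 'M[F]_n) :
  invariant [:: M1; M2] U = col_stable M1 U && col_stable M2 U.
Proof. by rewrite /invariant /= andbT. Qed.

Lemma eqmx1E m n (A : 'M[F]_(m, n)) : (A == 1%:M)%MS = row_full A.
Proof. by rewrite submx1 sub1mx. Qed.

Lemma mxrank_complementary n (U V : 'M[F]_n) :
  (U :&: V == (0 : 'M_n))%MS -> (U + V == 1%:M)%MS -> (\rank U + \rank V)%N = n.
Proof.
by move=> /eqmx0P capUV; rewrite eqmx1E -mxrank_sum_cap capUV mxrank0 addn0 => /eqnP.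
Qed.

Lemma capmx_eq0_of_mxrank n (U V : 'M[F]_n) :
  (U + V == 1%:M)%MS -> (\rank U + \rank V)%N = n -> (U :&: V == (0 : 'M_n))%MS.
Proof.
rewrite eqmx1E => /eqnP sumUV /eqP; rewrite -mxrank_sum_cap sumUV -[X in _ == X]addn0.
by rewrite eqn_add2l mxrank_eq0 => /eqP ->; apply/eqmx0P.
Qed.

End Complements.

Section Subrepresentation.
Variable F : fieldType.

Lemma col_stable_capmx m1 m2 n (M : 'M[F]_n) (U : 'M_(m1, n)) (V : 'M_(m2, n)) :
  (U *m M^T <= U)%MS -> (V *m M^T <= V)%MS -> col_stable M (U :&: V)%MS.
Proof.
move=> stU stV; rewrite /col_stable sub_capmx.
by rewrite (submx_trans (submxMr _ (capmxSl U V)) stU) (submx_trans (submxMr _ (capmxSr U V)) stV).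
Qed.

Lemma col_stable_mulmx k n (T : 'M[F]_(k, n)) (M : 'M_n) (X W : 'M_k) :
  T *m M^T = X^T *m T -> col_stable X W -> col_stable M <<W *m T>>%MS.
Proof.
move=> TM stW; rewrite /col_stable (eqmxMr _ (genmxE _)) genmxE -mulmxA TM mulmxA.
exact: submxMr.
Qed.

Lemma pinvmx_genmxK k n (T : 'M[F]_(k, n)) (Z : 'M_n) :
  (Z <= T)%MS -> (<<Z *m pinvmx T>> *m T :=: Z)%MS.
Proof. by move=> sZT; apply: eqmx_trans (eqmxMr T (genmxE _)) _; rewrite mulmxKpV. Qed.

Lemma col_stable_pinvmx k n (T : 'M[F]_(k, n)) (M : 'M_n) (X : 'M_k) (Z : 'M_n) :
  row_free T -> T *m M^T = X^T *m T -> (Z <= T)%MS -> col_stable M Z ->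
  col_stable X <<Z *m pinvmx T>>%MS.
Proof.
move=> freeT TM sZT stZ; rewrite /col_stable -(submxMfree _ _ freeT) -mulmxA -TM mulmxA.
by rewrite (eqmxMr _ (pinvmx_genmxK sZT)) (pinvmx_genmxK sZT).
Qed.

(* [T *m M^T = X^T *m T] says that the row space of [T] is [M]-stable and that, in the
   basis formed by the rows of [T], [M] acts through [X]. *)
Lemma semisimple_subrep k n (T : 'M[F]_(k, n)) (M1 M2 : 'M_n) (X1 X2 : 'M_k) :
  row_free T -> T *m M1^T = X1^T *m T -> T *m M2^T = X2^T *m T ->
  semisimple [:: M1; M2] -> semisimple [:: X1; X2].
Proof.
move=> freeT TM1 TM2 ssM W; rewrite !invariant2E => /andP[stW1 stW2].
have : invariant [:: M1; M2] <<W *m T>>%MS.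
  by rewrite invariant2E (col_stable_mulmx TM1) ?(col_stable_mulmx TM2).
case/ssM => V [/[!invariant2E] /andP[stV1 stV2] [/andP[capWV _] sumWV]].
have {}sumWV : (W *m T + V :=: 1%:M)%MS.
  exact: eqmx_trans (adds_eqmx (eqmx_sym (genmxE _)) (eqmx_refl V)) (eqmxP sumWV).
have sVT : (V :&: T <= T)%MS := capmxSr V T.
have stT (M : 'M_n) (X : 'M_k) : T *m M^T = X^T *m T -> (T *m M^T <= T)%MS.
  by move=> ->; apply: submxMl.
exists <<(V :&: T) *m pinvmx T>>%MS; split; [|split].
- rewrite invariant2E (col_stable_pinvmx freeT TM1) ?(col_stable_pinvmx freeT TM2) //.
    exact: col_stable_capmx stV2 (stT _ _ TM2).
  exact: col_stable_capmx stV1 (stT _ _ TM1).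
- apply/eqmx0P/eqP; rewrite -(mulmx_free_eq0 _ freeT) -submx0.
  apply: submx_trans capWV; rewrite sub_capmx genmxE submxMr ?capmxSl //=.
  apply: submx_trans (submxMr T (capmxSr _ _)) _.
  by rewrite (pinvmx_genmxK sVT) capmxSl.
- rewrite eqmx1E /row_full -(mxrankMfree _ freeT) (addsmxMr W _ T).
  rewrite (adds_eqmx (eqmx_refl _) (pinvmx_genmxK sVT)) (matrix_modl V (submxMl W T)).
  by rewrite (cap_eqmx sumWV (eqmx_refl T)) capmxC capmxT // -sub1mx.
Qed.
End Subrepresentation.

Section DirectSum.
Variables (F : fieldType) (k m : nat).
Implicit Types (X : 'M[F]_k) (Y : 'M[F]_m).

Let T1 : 'M[F]_(k, k + m) := row_mx 1%:M 0.
Let T2 : 'M[F]_(m, k + m) := row_mx 0 1%:M.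

Lemma mulmx_block_diag X1 Y1 X2 Y2 :
  block_mx X1 0 0 Y1 *m block_mx X2 0 0 Y2 = block_mx (X1 *m X2) 0 0 (Y1 *m Y2).
Proof. by rewrite mulmx_block !mulmx0 !mul0mx !addr0 !add0r. Qed.

Lemma tr_block_diag X Y : (block_mx X 0 0 Y)^T = block_mx X^T 0 0 Y^T.
Proof. by rewrite tr_block_mx !trmx0. Qed.

Lemma cube_block_diag X Y : cube (block_mx X 0 0 Y) = block_mx (cube X) 0 0 (cube Y).
Proof. by rewrite /cube !mulmx_block_diag. Qed.

Lemma block_diag_eq1 X Y : block_mx X 0 0 Y = 1%:M <-> X = 1%:M /\ Y = 1%:M.
Proof. by rewrite (scalar_mx_block k m); split => [/eq_block_mx[-> _ _ ->]|[-> ->]]. Qed.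

Lemma col_stable_block_diag X Y (W1 : 'M_k) (W2 : 'M_m) :
  col_stable X W1 -> col_stable Y W2 ->
  col_stable (block_mx X 0 0 Y) (block_mx W1 0 0 W2).
Proof.
rewrite /col_stable tr_block_diag mulmx_block_diag => /submxP[E1 ->] /submxP[E2 ->].
by rewrite -mulmx_block_diag submxMl.
Qed.

Let row_free_T1 : row_free T1.
Proof. by rewrite /row_free rank_row_mx0 mxrank1. Qed.

Let row_free_T2 : row_free T2.
Proof. by rewrite /row_free rank_row_0mx mxrank1. Qed.

Let T1_block X Y : T1 *m block_mx X 0 0 Y = X *m T1.
Proof. by rewrite mul_row_block mul_mx_row !mulmx0 !mul0mx !mul1mx mulmx1 addr0 add0r. Qed.

Let T2_block X Y : T2 *m block_mx X 0 0 Y = Y *m T2.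
Proof. by rewrite mul_row_block mul_mx_row !mulmx0 !mul0mx !mul1mx mulmx1 addr0 add0r. Qed.

Let T1_intertwines X Y : T1 *m (block_mx X 0 0 Y)^T = X^T *m T1.
Proof. by rewrite tr_block_diag T1_block. Qed.

Let T2_intertwines X Y : T2 *m (block_mx X 0 0 Y)^T = Y^T *m T2.
Proof. by rewrite tr_block_diag T2_block. Qed.

Lemma semisimple_block_diag_l X1 X2 Y1 Y2 :
  semisimple [:: block_mx X1 0 0 Y1; block_mx X2 0 0 Y2] -> semisimple [:: X1; X2].
Proof. exact: semisimple_subrep row_free_T1 (T1_intertwines _ _) (T1_intertwines _ _). Qed.

Lemma semisimple_block_diag_r X1 X2 Y1 Y2 :
  semisimple [:: block_mx X1 0 0 Y1; block_mx X2 0 0 Y2] -> semisimple [:: Y1; Y2].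
Proof. exact: semisimple_subrep row_free_T2 (T2_intertwines _ _) (T2_intertwines _ _). Qed.

Let col_T1_T2 : col_mx T1 T2 = 1%:M.
Proof. by rewrite -block_mxEv -scalar_mx_block. Qed.

Let T1_T2_id : T1^T *m T1 + T2^T *m T2 = 1%:M.
Proof.
rewrite !tr_row_mx !trmx0 !trmx1 !mul_col_mx !mul_mx_row !mul1mx !mul0mx.
rewrite add_col_mx !add_row_mx !addr0 !add0r; exact: col_T1_T2.
Qed.

Let T1_kermx : (T1 :=: kermx T2^T)%MS.
Proof.
apply/eqmxP; rewrite -(mxrank_leqif_eq _).2.
  by rewrite mxrank_ker mxrank_tr (eqnP row_free_T2) addnK (eqnP row_free_T1).
by apply/sub_kermxP; rewrite tr_row_mx trmx0 trmx1 mul_row_col mulmx0 mul0mx addr0.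
Qed.

Let mxrank_T1_T2 (U : 'M_(k + m)) : \rank U = (\rank (U *m T2^T) + \rank (U :&: T1))%N.
Proof. by rewrite -(mxrank_mul_ker U T2^T) (cap_eqmx (eqmx_refl U) T1_kermx). Qed.

Let addsmx_block_full (U : 'M_(k + m)) (W1 : 'M_k) (W2 : 'M_m) :
  (<<(U :&: T1) *m pinvmx T1>> + W1 == 1%:M)%MS -> (<<U *m T2^T>> + W2 == 1%:M)%MS ->
  (U + block_mx W1 0 0 W2 == 1%:M)%MS.
Proof.
rewrite !eqmx1E -!sub1mx => sumW1 sumW2.
have sT1 : (T1 <= U + block_mx W1 0 0 W2)%MS.
  rewrite -[T1]mul1mx; apply: submx_trans (submxMr T1 sumW1) _.
  rewrite addsmxMr addsmxS // ?(pinvmx_genmxK (capmxSr U T1)) ?capmxSl //.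
  by rewrite -(T1_block W1 W2) submxMl.
have sT2 : (T2 <= U + block_mx W1 0 0 W2)%MS.
  rewrite -[T2]mul1mx; apply: submx_trans (submxMr T2 sumW2) _.
  rewrite addsmxMr addsmx_sub -(T2_block W1 W2) (submx_trans (submxMl _ _) (addsmxSr _ _)).
  rewrite andbT (eqmxMr _ (genmxE _)) -mulmxA.
  have -> : T2^T *m T2 = 1%:M - T1^T *m T1 by rewrite -T1_T2_id addrC addKr.
  rewrite mulmxBr mulmx1 addmx_sub ?addsmxSl // -mulNmx mulmxA.
  exact: submx_trans (submxMl _ _) sT1.
by rewrite -col_T1_T2 col_mx_sub sT1 sT2.
Qed.

Lemma semisimple_block_diag X1 X2 Y1 Y2 :
  semisimple [:: X1; X2] -> semisimple [:: Y1; Y2] ->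
  semisimple [:: block_mx X1 0 0 Y1; block_mx X2 0 0 Y2].
Proof.
move=> ssX ssY U; rewrite invariant2E => /andP[stU1 stU2].
have sKT1 : (U :&: T1 <= T1)%MS := capmxSr U T1.
have stT1 X Y : (T1 *m (block_mx X 0 0 Y)^T <= T1)%MS by rewrite T1_intertwines submxMl.
have T2tr X Y : T2^T *m Y^T = (block_mx X 0 0 Y)^T *m T2^T.
  by rewrite -!trmx_mul T2_block.
have [|W1 [/[!invariant2E] /andP[stW11 stW12] [capW1 sumW1]]] :=
  ssX <<(U :&: T1) *m pinvmx T1>>%MS.
  rewrite invariant2E (col_stable_pinvmx row_free_T1 (T1_intertwines X1 Y1)) ?col_stable_capmx //.
  by rewrite (col_stable_pinvmx row_free_T1 (T1_intertwines X2 Y2)) ?col_stable_capmx.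
have [|W2 [/[!invariant2E] /andP[stW21 stW22] [capW2 sumW2]]] := ssY <<U *m T2^T>>%MS.
  by rewrite invariant2E (col_stable_mulmx (T2tr X1 Y1)) ?(col_stable_mulmx (T2tr X2 Y2)).
have sumUW := addsmx_block_full sumW1 sumW2.
exists (block_mx W1 0 0 W2); split; [|split] => //.
  by rewrite invariant2E !col_stable_block_diag.
apply: capmx_eq0_of_mxrank sumUW _.
have rK1 : \rank <<(U :&: T1) *m pinvmx T1>>%MS = \rank (U :&: T1).
  by rewrite -(mxrankMfree _ row_free_T1) (pinvmx_genmxK sKT1).
rewrite rank_diag_block_mx (mxrank_T1_T2 U) (addnC (\rank (U *m T2^T))) addnACA.
by rewrite -rK1 (mxrank_complementary capW1 sumW1) -genmxE (mxrank_complementary capW2 sumW2).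
Qed.

End DirectSum.

Section BlockDecomposition.
Variable F : fieldType.

Lemma exists_row_base k n (U : 'M[F]_n) :
  \rank U = k -> exists Ub : 'M_(k, n), (Ub :=: U)%MS.
Proof. by move=> <-; exists (row_base U); apply: eq_row_base. Qed.

Lemma row_bases_det1 k m (U V : 'M[F]_(k + m.+1)) :
  (U + V == 1%:M)%MS -> \rank U = k -> \rank V = m.+1 ->
  exists Ub Vb, [/\ (Ub :=: U)%MS, (Vb :=: V)%MS & \det (col_mx Ub Vb) = 1].
Proof.
move=> sumUV /exists_row_base[Ub eUb] /exists_row_base[Vb eVb].
have : \det (col_mx Ub Vb) != 0.
  rewrite -unitfE -unitmxE -row_full_unit /row_full -addsmxE (adds_eqmx eUb eVb).
  by rewrite eqmx1E in sumUV.
set d := \det _ => d_neq0.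
pose s := diag_mx (\row_(i < m.+1) if i == ord0 then d^-1 else 1).
have det_s : \det s = d^-1.
  rewrite det_diag big_ord_recl mxE eqxx big1 ?mulr1 // => i _.
  by rewrite mxE eq_sym (negbTE (neq_lift _ _)).
exists Ub, (s *m Vb); split => //.
  apply: eqmx_trans (eqmxMfull _ _) eVb.
  by rewrite row_full_unit unitmxE det_s unitfE invr_eq0.
have -> : col_mx Ub (s *m Vb) = block_mx 1%:M 0 0 s *m col_mx Ub Vb.
  by rewrite mul_block_col !mul1mx !mul0mx addr0 add0r.
by rewrite det_mulmx det_ublock det1 mul1r det_s mulVf.
Qed.

Lemma conj_block_diag k m (Q M : 'M[F]_(k + m)) (X : 'M_k) (Y : 'M_m) :
  Q \in unitmx -> Q *m M^T = block_mx X 0 0 Y *m Q ->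
  invmx Q^T *m M *m invmx (invmx Q^T) = block_mx X^T 0 0 Y^T.
Proof.
move=> unitQ QM; rewrite invmxK -mulmxA -[M]trmxK -trmx_mul QM trmx_mul mulmxA.
by rewrite mulVmx ?unitmx_tr // mul1mx tr_block_diag.
Qed.

Lemma block_diag_conj k m (M1 M2 U V : 'M[F]_(k + m.+1)) :
  invariant [:: M1; M2] U -> invariant [:: M1; M2] V ->
  (U + V == 1%:M)%MS -> \rank U = k -> \rank V = m.+1 ->
  exists (P : 'M_(k + m.+1)) (X1 X2 : 'M_k) (Y1 Y2 : 'M_m.+1),
    [/\ \det P = 1, P \in unitmx, P *m M1 *m invmx P = block_mx X1 0 0 Y1
      & P *m M2 *m invmx P = block_mx X2 0 0 Y2].
Proof.
rewrite !invariant2E => /andP[stU1 stU2] /andP[stV1 stV2] sumUV rankU rankV.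
have [Ub [Vb [eUb eVb detQ]]] := row_bases_det1 sumUV rankU rankV.
have unitQ : col_mx Ub Vb \in unitmx by rewrite unitmxE detQ unitr1.
have conjM (M : 'M_(k + m.+1)) : col_stable M U -> col_stable M V ->
    exists X Y, col_mx Ub Vb *m M^T = block_mx X 0 0 Y *m col_mx Ub Vb.
  move=> stU stV.
  have /submxP[X eX] : (Ub *m M^T <= Ub)%MS by rewrite (eqmxMr _ eUb) eUb.
  have /submxP[Y eY] : (Vb *m M^T <= Vb)%MS by rewrite (eqmxMr _ eVb) eVb.
  by exists X, Y; rewrite mul_col_mx mul_block_col eX eY !mul0mx addr0 add0r.
have [X1 [Y1 QM1]] := conjM M1 stU1 stV1.
have [X2 [Y2 QM2]] := conjM M2 stU2 stV2.
exists (invmx (col_mx Ub Vb)^T), X1^T, X2^T, Y1^T, Y2^T; split.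
- by rewrite det_inv det_tr detQ invr1.
- by rewrite unitmx_inv unitmx_tr.
- exact: conj_block_diag.
- exact: conj_block_diag.
Qed.

End BlockDecomposition.

Lemma cube_map_mx (R S : pzRingType) (f : {rmorphism R -> S}) n (M : 'M[R]_n) :
  cube (map_mx f M) = map_mx f (cube M).
Proof. by rewrite /cube !map_mxM. Qed.

Section Conjugation.
Variable F : fieldType.

Lemma cube_tr n (M : 'M[F]_n) : cube M^T = (cube M)^T.
Proof. by rewrite /cube !trmx_mul mulmxA. Qed.

Lemma cube_conj n (P M : 'M[F]_n) : P \in unitmx ->
  cube (P *m M *m invmx P) = P *m cube M *m invmx P.
Proof. by move=> unitP; rewrite /cube !mulmxA !(mulmxKV unitP). Qed.

Lemma rep_SL_conj n (P A B : 'M[F]_n) : P \in unitmx -> rep_SL A B ->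
  rep_SL (P *m A *m invmx P) (P *m B *m invmx P).
Proof.
move=> unitP [detA detB cubeA cubeB cubeAB].
have detP : \det P * \det (invmx P) = 1 by rewrite -det_mulmx mulmxV // det1.
have cube_conj1 M : cube M = 1%:M -> cube (P *m M *m invmx P) = 1%:M.
  by move=> cubeM; rewrite cube_conj // cubeM mulmx1 mulmxV.
split; rewrite ?cube_conj1 // ?det_mulmx ?detA ?detB ?mulr1 //.
by rewrite !mulmxA (mulmxKV unitP) -(mulmxA P) cube_conj1.
Qed.

Lemma semisimple_conj n (P A B : 'M[F]_n) : P \in unitmx -> semisimple [:: A; B] ->
  semisimple [:: P *m A *m invmx P; P *m B *m invmx P].
Proof.
move=> unitP; apply: (@semisimple_subrep _ n n (invmx P)^T).
- by rewrite /row_free mxrank_tr mxrank_unit ?unitmx_inv.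
- by rewrite -!trmx_mul; congr (_^T); rewrite !mulmxA mulVmx // mul1mx.
- by rewrite -!trmx_mul; congr (_^T); rewrite !mulmxA mulVmx // mul1mx.
Qed.

Lemma rep_SL1 n : rep_SL (1%:M : 'M[F]_n) 1%:M.
Proof. by split; rewrite ?det1 /cube ?mulmx1. Qed.

Lemma semisimple_id n : semisimple [:: (1%:M : 'M[F]_n); 1%:M].
Proof.
move=> U _; exists U^C%MS; split.
  by rewrite invariant2E /col_stable trmx1 mulmx1 submx_refl.
by rewrite capmx_compl eqmx1E addsmx_compl_full; split => //; apply/eqmx0P.
Qed.

End Conjugation.

Section RealRepresentations.
Variable R : realFieldType.

Lemma real_cube_eq1 (x : R) : x ^+ 3 = 1 -> x = 1.
Proof.
move=> x3; have : (x - 1) * (x ^+ 2 + x + 1) = 0.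
  have -> : (x - 1) * (x ^+ 2 + x + 1) = x ^+ 3 - 1 by ring.
  by rewrite x3 subrr.
have : x ^+ 2 + x + 1 != 0.
  rewrite lt0r_neq0 // (_ : _ + 1 = (x + 2^-1) ^+ 2 + 3%:R / 4%:R); last by field.
  by rewrite ltr_wpDl ?sqr_ge0 // divr_gt0 ?ltr0n.
by move/negbTE => h /eqP; rewrite mulf_eq0 h orbF subr_eq0 => /eqP.
Qed.

Lemma det_cube n (M : 'M[R]_n) : cube M = 1%:M -> \det M = 1.
Proof.
by move=> cubeM; apply: real_cube_eq1; rewrite -(det1 R n) -cubeM !det_mulmx -expr2 -exprSr.
Qed.
Lemma rep_SL_block_diagE k m (X1 X2 : 'M[R]_k) (Y1 Y2 : 'M[R]_m) :
  rep_SL (block_mx X1 0 0 Y1) (block_mx X2 0 0 Y2) <-> rep_SL X1 X2 /\ rep_SL Y1 Y2.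
Proof.
rewrite /rep_SL mulmx_block_diag !cube_block_diag !det_ublock.
split=> [[_ _ /block_diag_eq1[cX1 cY1] /block_diag_eq1[cX2 cY2] /block_diag_eq1[cX cY]]|].
  by split; split; rewrite ?det_cube.
move=> [[dX1 dX2 cX1 cX2 cX] [dY1 dY2 cY1 cY2 cY]].
by split; rewrite ?dX1 ?dX2 ?dY1 ?dY2 ?mulr1 //; apply/block_diag_eq1.
Qed.

Lemma mx11_cube_eq1 (Y : 'M[R]_1) : cube Y = 1%:M -> Y = 1%:M.
Proof.
move=> /(congr1 (fun M : 'M[R]_1 => M 0 0)); rewrite [Y]mx11_scalar /cube -!scalar_mxM !mxE.
by rewrite /= !mulr1n -expr2 -exprSr => /real_cube_eq1 ->.
Qed.

End RealRepresentations.

Section CommonFixedVector.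
Variables (F : fieldType) (n : nat) (A B : 'M[F]_n).
Hypothesis cubeA : cube A = 1%:M.

Let D := col_mx (1%:M - A *m A) (B - A *m A).

Lemma eigenspace1K (M : 'M[F]_n) : eigenspace M 1 *m M = eigenspace M 1.
Proof. by have /eigenspaceP := submx_refl (eigenspace M 1); rewrite scale1r. Qed.

Lemma common_fixed_col : (\rank D < n)%N ->
  exists2 w : 'cV_n, w != 0 & A *m w = w /\ B *m w = w.
Proof.
rewrite -subn_gt0 -mxrank_coker lt0n mxrank_eq0 => Kn0.
set w := (nz_row (cokermx D)^T)^T.
have Dw : D *m w = 0.
  rewrite /w; have /submxP [E ->] := nz_row_sub (cokermx D)^T.
  by rewrite trmx_mul trmxK mulmxA mulmx_coker mul0mx.
have w_fixA2 : A *m A *m w = w.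
  apply/esym/eqP; move/eqP: Dw.
  by rewrite mul_col_mx col_mx_eq0 !mulmxBl mul1mx subr_eq0 => /andP[-> _].
have w_fixA : A *m w = w by rewrite -{1}w_fixA2 !mulmxA -/(cube A) cubeA mul1mx.
exists w; first by rewrite trmx_eq0 nz_row_eq0 trmx_eq0.
split => //; apply/eqP; move/eqP: Dw.
by rewrite mul_col_mx col_mx_eq0 !mulmxBl w_fixA2 !subr_eq0 => /andP[_ ->].
Qed.

(* For [x], [y], [z] fixed by [A], [B], [B *m A], the row [(y - x, z - y)] lies in the left
   kernel of [D]; this is how a large total dimension of fixed spaces yields a common fixed
   vector. *)
Let S := block_mx (block_mx (eigenspace A 1) 0 0 (eigenspace B 1)) 0 0 (eigenspace (B *m A) 1).
Let Diff : 'M[F]_(n + n + n, n + n) :=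
  col_mx (col_mx (row_mx (- 1%:M) 0) (row_mx 1%:M (- 1%:M))) (row_mx 0 1%:M).

Lemma mul_row3_diff m (X Y Z : 'M[F]_(m, n)) :
  row_mx (row_mx X Y) Z *m Diff = row_mx (Y - X) (Z - Y).
Proof.
by rewrite !mul_row_col !mul_mx_row !mulmxN !mulmx0 !mulmx1 !add_row_mx addr0 add0r !(addrC (- _)).
Qed.

Lemma mul_diff_fixed m (X Y Z : 'M[F]_(m, n)) :
  X *m A = X -> Y *m B = Y -> Z *m (B *m A) = Z -> row_mx (Y - X) (Z - Y) *m D = 0.
Proof.
move=> XA YB ZBA.
have XA2 : X *m (A *m A) = X by rewrite mulmxA !XA.
have ZB : Z *m B = Z *m (A *m A).
  by rewrite -[Z *m B]mulmx1 -cubeA /cube !mulmxA -(mulmxA Z B A) ZBA.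
rewrite mul_row_col !mulmxBl !mulmxBr !mulmx1 XA2 YB ZB.
by rewrite !subrr subr0 sub0r subrr.
Qed.

Lemma fixed_diff_in_kermx : (S *m Diff <= kermx D)%MS.
Proof.
apply/sub_kermxP.
have -> : S = col_mx (col_mx (row_mx (row_mx (eigenspace A 1) 0) 0)
                             (row_mx (row_mx 0 (eigenspace B 1)) 0))
                     (row_mx (row_mx 0 0) (eigenspace (B *m A) 1)).
  rewrite row_mx0 -[col_mx (row_mx (row_mx (eigenspace A 1) 0) 0) _]block_mxEv.
  by rewrite [block_mx (row_mx (eigenspace A 1) 0) _ _ _]block_mxEh col_mx0 -!block_mxEv.
rewrite (mul_col_mx _ _ Diff) (mul_col_mx _ _ Diff) !mul_row3_diff !mul_col_mx.
by rewrite !mul_diff_fixed ?col_mx0 ?mul0mx ?eigenspace1K.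
Qed.

Lemma common_fixed_row : \rank D = n ->
  (n < \rank (eigenspace A 1) + \rank (eigenspace B 1) + \rank (eigenspace (B *m A) 1))%N ->
  exists2 x : 'rV_n, x != 0 & x *m A = x /\ x *m B = x.
Proof.
move=> rankD rank_gt.
have rank_SDiff : (\rank (S *m Diff) <= n)%N.
  by have := mxrankS fixed_diff_in_kermx; rewrite mxrank_ker rankD addnK.
have : (S :&: kermx Diff)%MS != 0.
  rewrite -mxrank_eq0 -lt0n -(ltn_add2l (\rank (S *m Diff))) addn0 mxrank_mul_ker.
  by rewrite !rank_diag_block_mx; apply: leq_ltn_trans rank_SDiff rank_gt.
rewrite -nz_row_eq0; set v := nz_row _ => v_neq0.
have := nz_row_sub (S :&: kermx Diff)%MS; rewrite -/v sub_capmx => /andP[/submxP[E vE]].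
move/sub_kermxP; move: v_neq0; rewrite vE -(hsubmxK E) -(hsubmxK (lsubmx E)) !mul_row_block.
rewrite !mulmx0 ?mul0mx !addr0 !add0r mul_row3_diff => v_neq0 /eqP.
rewrite row_mx_eq0 !subr_eq0 => /andP[/eqP eYX /eqP eZY].
exists (lsubmx (lsubmx E) *m (eigenspace A 1)).
  by apply: contraNneq v_neq0 => x0; rewrite eZY eYX x0 !row_mx0.
by split; [|rewrite -eYX]; rewrite -mulmxA eigenspace1K.
Qed.

Lemma common_fixed_vector :
  (n < \rank (eigenspace A 1) + \rank (eigenspace B 1) + \rank (eigenspace (B *m A) 1))%N ->
  (exists2 x : 'rV_n, x != 0 & x *m A = x /\ x *m B = x) \/
  (exists2 w : 'cV_n, w != 0 & A *m w = w /\ B *m w = w).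
Proof.
move=> rank_gt; have [/common_fixed_col|rankD] := ltnP (\rank D) n; first by right.
by left; apply: common_fixed_row => //; apply/eqP; rewrite eqn_leq rank_leq_col.
Qed.

End CommonFixedVector.

Section CubeRootsOfUnity.
Variable K : fieldType.

Lemma cube_scale n (c : K) (M : 'M[K]_n) :
  cube (c *: M) = c ^+ 3 *: cube M.
Proof. by rewrite /cube -!(scalemxAl, scalemxAr) !scalerA -expr2 -exprSr. Qed.

Lemma sub_eigenspace1_cube n (M : 'M[K]_n) :
  cube M = 1%:M -> ((1%:M + M + M *m M)%R <= eigenspace M 1)%MS.
Proof.
move=> cubeM; apply/eigenspaceP; rewrite scale1r !mulmxDl mul1mx -/(cube M) cubeM.
by rewrite addrC addrA.
Qed.

Lemma cube_root_expr3 (w : K) : w ^+ 2 + w + 1 = 0 -> w ^+ 3 = 1.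
Proof.
move=> w_root; apply/eqP; rewrite -subr_eq0.
have -> : w ^+ 3 - 1 = (w - 1) * (w ^+ 2 + w + 1) by ring.
by rewrite w_root mulr0.
Qed.

Lemma eigenspaces_cube_root n (w : K) (M : 'M[K]_n) :
  w ^+ 2 + w + 1 = 0 -> 3%:R != 0 :> K -> cube M = 1%:M ->
  (n <= \sum_(i < 3) \rank (eigenspace (w ^+ i *: M) 1))%N.
Proof.
move=> w_root three_neq0 cubeM; have w3 := cube_root_expr3 w_root.
pose P (i : 'I_3) := (1%:M + w ^+ i *: M + (w ^+ i *: M) *m (w ^+ i *: M))%R.
have sumP : \sum_(i < 3) P i = 3%:R *: 1%:M.
  rewrite !big_split /= sumr_const card_ord -scaler_nat -scaler_suml.
  under eq_bigr do rewrite -scalemxAl -scalemxAr scalerA -exprMn.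
  rewrite -scaler_suml !big_ord_recr !big_ord0 /= !add0r.
  have -> : w ^+ 0 + w ^+ 1 + w ^+ 2 = 0 by rewrite -w_root; ring.
  have -> : (w * w) ^+ 0 + (w * w) ^+ 1 + (w * w) ^+ 2 = 0.
    have -> : (w * w) ^+ 2 = w by rewrite -expr2 -exprM (exprD w 3 1) w3 mul1r.
    by rewrite -w_root; ring.
  by rewrite !scale0r !addr0.
have sub_sum : (1%:M <= \sum_(i < 3) eigenspace (w ^+ i *: M) 1)%MS.
  have -> : 1%:M = 3%:R^-1 *: \sum_(i < 3) P i :> 'M_n.
    by rewrite sumP scalerA mulVf ?scale1r.
  apply: scalemx_sub; apply: summx_sub_sums => i _; apply: sub_eigenspace1_cube.
  by rewrite cube_scale cubeM -exprM mulnC exprM w3 expr1n scale1r.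
by rewrite -{1}(mxrank1 K n); apply: leq_trans (mxrankS sub_sum) (mxrank_sum_leqif _).1.
Qed.
End CubeRootsOfUnity.

Lemma exists_cube_root1 (F : closedFieldType) : exists w : F, w ^+ 2 + w + 1 = 0.
Proof.
have [w] := @solve_monicpoly F 2%N (nth 0 [:: -1; -1]) isT.
rewrite !big_ord_recr big_ord0 /= add0r => w2.
by exists w; rewrite w2 expr0 expr1; ring.
Qed.

(* The nine sums add up to at least 36.  Were they all at most 4, they would all equal 4,
   which forces [a] and [b] to be constant, hence at least 2, and then [c] to vanish. *)
Lemma pigeonhole_Z3 (a b c : nat -> nat) :
  (4 <= \sum_(i < 3) a i)%N -> (4 <= \sum_(i < 3) b i)%N -> (4 <= \sum_(i < 3) c i)%N ->
  (c 3 = c 0)%N -> (c 4 = c 1)%N -> exists i j : nat, (4 < a i + b j + c (i + j))%N.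
Proof.
rewrite !big_ord_recr !big_ord0 /= => suma sumb sumc c3 c4.
have [|] := ltnP 4 (a 0 + b 0 + c 0)%N; first by exists 0%N, 0%N.
have [|] := ltnP 4 (a 0 + b 1 + c 1)%N; first by exists 0%N, 1%N.
have [|] := ltnP 4 (a 0 + b 2 + c 2)%N; first by exists 0%N, 2%N.
have [|] := ltnP 4 (a 1 + b 0 + c 1)%N; first by exists 1%N, 0%N.
have [|] := ltnP 4 (a 1 + b 1 + c 2)%N; first by exists 1%N, 1%N.
have [|] := ltnP 4 (a 1 + b 2 + c 0)%N; first by exists 1%N, 2%N; rewrite c3.
have [|] := ltnP 4 (a 2 + b 0 + c 2)%N; first by exists 2%N, 0%N.
have [|] := ltnP 4 (a 2 + b 1 + c 0)%N; first by exists 2%N, 1%N; rewrite c3.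
have [|] := ltnP 4 (a 2 + b 2 + c 1)%N; first by exists 2%N, 2%N; rewrite c4.
move=> *; exfalso; lia.
Qed.

Section CommonEigenvector.
Variables (K : fieldType) (w : K).
Hypotheses (w_root : w ^+ 2 + w + 1 = 0) (three_neq0 : 3%:R != 0 :> K).

Let w3 : w ^+ 3 = 1 := cube_root_expr3 w_root.

Let wX_neq0 i : w ^+ i != 0.
Proof.
apply: expf_neq0; apply: contra_eq_neq w_root => ->.
by rewrite expr0n /= !add0r oner_neq0.
Qed.

Let cube_wX i n (M : 'M[K]_n) : cube M = 1%:M -> cube (w ^+ i *: M) = 1%:M.
Proof. by move=> cubeM; rewrite cube_scale cubeM -exprM mulnC exprM w3 expr1n scale1r. Qed.

Let unscale_fixed n (c : K) (M : 'M[K]_n) (x : 'rV_n) :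
  c != 0 -> c *: (x *m M) = x -> x *m M = c^-1 *: x.
Proof. by move=> c_neq0 xM; rewrite -[in RHS]xM scalerA mulVf ?scale1r. Qed.

Definition common_left_eigenvector n (A B : 'M[K]_n) :=
  exists2 x : 'rV_n, x != 0 & exists a b, x *m A = a *: x /\ x *m B = b *: x.

Lemma common_left_eigenvector4 (A B : 'M[K]_4) :
  cube A = 1%:M -> cube B = 1%:M -> cube (B *m A) = 1%:M ->
  common_left_eigenvector A B \/ common_left_eigenvector A^T B^T.
Proof.
move=> cubeA cubeB cubeBA.
pose rk n (M : 'M[K]_n) (i : nat) := \rank (eigenspace (w ^+ i *: M) 1).
have [i [j]] : exists i j : nat, (4 < rk _ A i + rk _ B j + rk _ (B *m A) (i + j))%N.
  apply: pigeonhole_Z3; rewrite ?eigenspaces_cube_root //.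
  - by rewrite /rk (exprD w 3 0) w3 mul1r.
  - by rewrite /rk (exprD w 3 1) w3 mul1r.
have -> : rk _ (B *m A) (i + j) = \rank (eigenspace ((w ^+ j *: B) *m (w ^+ i *: A)) 1).
  by rewrite /rk -scalemxAl -scalemxAr scalerA -exprD addnC.
move/common_fixed_vector => /(_ (cube_wX i cubeA)) [[x x_neq0 [xA xB]]|[y y_neq0 [Ay By]]].
  rewrite -!scalemxAr in xA xB.
  left; exists x => //; exists (w ^+ i)^-1, (w ^+ j)^-1.
  by rewrite (unscale_fixed (wX_neq0 i) xA) (unscale_fixed (wX_neq0 j) xB).
right; exists y^T; first by rewrite trmx_eq0.
move: Ay By => /(congr1 trmx) + /(congr1 trmx); rewrite !trmx_mul !linearZ /= => yA yB.
exists (w ^+ i)^-1, (w ^+ j)^-1.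
by rewrite (unscale_fixed (wX_neq0 i) yA) (unscale_fixed (wX_neq0 j) yB).
Qed.

End CommonEigenvector.

Section Realification.
Variable R : rcfType.
Local Notation C := R[i].
Local Notation Re := (@complex.Re R).
Local Notation Im := (@complex.Im R).
Local Notation cmx M := (map_mx (real_complex R) M).

Definition reim n (x : 'rV[C]_n) : 'M[R]_(1 + 1, n) := col_mx (map_mx Re x) (map_mx Im x).

Lemma reim_eq0 n (x : 'rV[C]_n) : (reim x == 0) = (x == 0).
Proof.
apply/idP/idP => [|/eqP ->]; last by rewrite /reim !map_mx0 col_mx0.
rewrite col_mx_eq0 => /andP[/eqP reX /eqP imX]; apply/eqP/matrixP => i j.
have := congr1 (fun X : 'M[R]_(1, n) => X i j) reX.
have := congr1 (fun X : 'M[R]_(1, n) => X i j) imX.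
by rewrite !mxE; case: (x i j) => a b /= -> ->.
Qed.

Let Re_sum I (r : seq I) (P : pred I) (f : I -> C) :
  Re (\sum_(i <- r | P i) f i) = \sum_(i <- r | P i) Re (f i).
Proof. by apply: big_morph => [[a b] [c d]|]. Qed.

Let Im_sum I (r : seq I) (P : pred I) (f : I -> C) :
  Im (\sum_(i <- r | P i) f i) = \sum_(i <- r | P i) Im (f i).
Proof. by apply: big_morph => [[a b] [c d]|]. Qed.

Let Re_mul (z w : C) : Re (z * w) = Re z * Re w - Im z * Im w.
Proof. by case: z; case: w. Qed.

Let Im_mul (z w : C) : Im (z * w) = Re z * Im w + Im z * Re w.
Proof. by case: z; case: w. Qed.

Lemma reim_mulmx n (M : 'M[R]_n) (x : 'rV[C]_n) (l : C) :
  x *m cmx M = l *: x ->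
  reim x *m M = block_mx (Re l)%:M (- Im l)%:M (Im l)%:M (Re l)%:M *m reim x.
Proof.
move=> xM; rewrite mul_col_mx mul_block_col !mul_scalar_mx scaleNr; congr col_mx.
  apply/matrixP => i j; have := congr1 (fun X : 'rV[C]_n => Re (X i j)) xM.
  rewrite !mxE Re_sum Re_mul => <-.
  by apply: eq_bigr => k _; rewrite !mxE Re_mul /= mulr0 subr0.
apply/matrixP => i j; have := congr1 (fun X : 'rV[C]_n => Im (X i j)) xM.
rewrite !mxE Im_sum Im_mul addrC => <-.
by apply: eq_bigr => k _; rewrite !mxE Im_mul /= mulr0 add0r.
Qed.

Lemma invariant_reim n (M1 M2 : 'M[R]_n) (x : 'rV[C]_n) (l1 l2 : C) :
  x != 0 -> x *m cmx M1^T = l1 *: x -> x *m cmx M2^T = l2 *: x ->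
  [/\ invariant [:: M1; M2] <<reim x>>%MS, (0 < \rank <<reim x>>)%N
    & (\rank <<reim x>> <= 2)%N].
Proof.
move=> x_neq0 xM1 xM2; rewrite genmxE lt0n mxrank_eq0 reim_eq0 x_neq0 rank_leq_row.
split => //; rewrite invariant2E /col_stable !(eqmxMr _ (genmxE _)) !genmxE.
by rewrite (reim_mulmx xM1) (reim_mulmx xM2) !submxMl.
Qed.

Lemma invariant_kermx_reim n (M1 M2 : 'M[R]_n) (x : 'rV[C]_n) (l1 l2 : C) :
  x != 0 -> x *m cmx M1 = l1 *: x -> x *m cmx M2 = l2 *: x ->
  [/\ invariant [:: M1; M2] (kermx (reim x)^T), (n - 2 <= \rank (kermx (reim x)^T))%N
    & (\rank (kermx (reim x)^T) < n)%N].
Proof.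
move=> x_neq0 xM1 xM2.
have reim_gt0 : (0 < \rank (reim x))%N by rewrite lt0n mxrank_eq0 reim_eq0.
have stable (M : 'M_n) (l : C) : x *m cmx M = l *: x -> col_stable M (kermx (reim x)^T).
  move=> xM; apply/sub_kermxP.
  by rewrite -mulmxA -trmx_mul (reim_mulmx xM) trmx_mul mulmxA mulmx_ker mul0mx.
rewrite invariant2E (stable _ _ xM1) (stable _ _ xM2) mxrank_ker mxrank_tr.
rewrite leq_sub2l ?rank_leq_row // ltn_subrL reim_gt0.
by split => //; apply: leq_trans reim_gt0 (rank_leq_col _).
Qed.

End Realification.

Section Proposition4p4.
Variable R : rcfType.
Implicit Types A B : 'M[R]_4.
Local Notation cmx M := (map_mx (real_complex R) M).

Lemma exists_proper_invariant A B : rep_SL A B ->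
  exists U : 'M[R]_4, invariant [:: A; B] U /\ (0 < \rank U < 4)%N.
Proof.
case=> _ _ cubeA cubeB cubeAB.
have [w w_root] := exists_cube_root1 R[i].
have three_neq0 : 3%:R != 0 :> R[i] by rewrite pnatr_eq0.
have cube1 (M : 'M[R]_4) : cube M = 1%:M -> cube (cmx M^T) = 1%:M.
  by move=> cubeM; rewrite cube_map_mx cube_tr cubeM trmx1 map_mx1.
have := common_left_eigenvector4 w_root three_neq0 (cube1 _ cubeA) (cube1 _ cubeB).
rewrite -map_mxM -trmx_mul => /(_ (cube1 _ cubeAB)).
case=> [[x x_neq0 [a [b [xA xB]]]]|[x x_neq0 [a [b]]]].
  have [invU rank_gt0 rank_le2] := invariant_reim x_neq0 xA xB.
  by exists <<reim x>>%MS; rewrite invU rank_gt0 (leq_ltn_trans rank_le2).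
rewrite !map_trmx !trmxK => -[xA xB].
have [invU rank_ge2 rank_lt4] := invariant_kermx_reim x_neq0 xA xB.
by exists (kermx (reim x)^T); rewrite invU rank_lt4 (leq_trans _ rank_ge2).
Qed.

Lemma invariant_complements4 A B : rep_SL A B -> semisimple [:: A; B] ->
  exists U V, [/\ invariant [:: A; B] U, invariant [:: A; B] V, (U + V == 1%:M)%MS
    & (\rank U = 1 /\ \rank V = 3 \/ \rank U = 2 /\ \rank V = 2)%N].
Proof.
move=> repAB ssAB; have [U0 [invU0 /andP[rank_gt0 rank_lt4]]] := exists_proper_invariant repAB.
have [V0 [invV0 [capUV sumUV]]] := ssAB U0 invU0.
have rank_sum := mxrank_complementary capUV sumUV.
have [r1|r2|r3] : [\/ \rank U0 = 1, \rank U0 = 2 | \rank U0 = 3]%N.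
  by case: (\rank U0) rank_gt0 rank_lt4 => [|[|[|[|r]]]] // _ _; constructor.
- exists U0, V0; split; [done | done | done | left; split; first exact: r1].
  by apply: (@addnI (\rank U0)); rewrite rank_sum r1.
- exists U0, V0; split; [done | done | done | right; split; first exact: r2].
  by apply: (@addnI (\rank U0)); rewrite rank_sum r2.
- exists V0, U0; split; [done | done | by rewrite addsmxC | left; split; last exact: r3].
  by apply: (@addIn (\rank U0)); rewrite addnC rank_sum r3.
Qed.

Lemma conj_incl_i A B U V : rep_SL A B -> semisimple [:: A; B] ->
  invariant [:: A; B] U -> invariant [:: A; B] V -> (U + V == 1%:M)%MS ->
  \rank U = 1%N -> \rank V = 3%N ->
  exists (P : 'M[R]_4) (A3 B3 : 'M[R]_3),
    [/\ \det P = 1, rep_SL A3 B3, semisimple [:: A3; B3],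
        P *m A *m invmx P = incl_i A3 & P *m B *m invmx P = incl_i B3].
Proof.
move=> repAB ssAB invU invV; rewrite addsmxC => sumVU rankU rankV.
have [P [X1 [X2 [Y1 [Y2 [detP unitP eA eB]]]]]] :=
  @block_diag_conj _ 3 0 _ _ _ _ invV invU sumVU rankV rankU.
have := semisimple_conj unitP ssAB; have := rep_SL_conj unitP repAB; rewrite eA eB.
move=> /rep_SL_block_diagE[repX [_ _ cubeY1 cubeY2 _]] /semisimple_block_diag_l ssX.
by exists P, X1, X2; rewrite eA eB /incl_i (mx11_cube_eq1 cubeY1) (mx11_cube_eq1 cubeY2).
Qed.

Lemma conj_incl_j A B U V : rep_SL A B -> semisimple [:: A; B] ->
  invariant [:: A; B] U -> invariant [:: A; B] V -> (U + V == 1%:M)%MS ->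
  \rank U = 2%N -> \rank V = 2%N ->
  exists (P : 'M[R]_4) (A1 B1 A2 B2 : 'M[R]_2),
    [/\ \det P = 1, rep_SL A1 B1 /\ semisimple [:: A1; B1],
        rep_SL A2 B2 /\ semisimple [:: A2; B2],
        P *m A *m invmx P = incl_j A1 A2 & P *m B *m invmx P = incl_j B1 B2].
Proof.
move=> repAB ssAB invU invV sumUV rankU rankV.
have [P [X1 [X2 [Y1 [Y2 [detP unitP eA eB]]]]]] :=
  @block_diag_conj _ 2 1 _ _ _ _ invU invV sumUV rankU rankV.
have := semisimple_conj unitP ssAB; have := rep_SL_conj unitP repAB; rewrite eA eB.
move=> /rep_SL_block_diagE[repX repY] ss.
exists P, X1, X2, Y1, Y2; split => //.
  by split => //; apply: semisimple_block_diag_l ss.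
by split => //; apply: semisimple_block_diag_r ss.
Qed.

End Proposition4p4.

Theorem proposition4p4 (R : realType) :
  (forall A B : 'M[R]_4, rep_SL A B -> semisimple [:: A; B] ->
     (exists U : 'M[R]_4,
        ((\rank U = 1)%N \/ (\rank U = 2)%N) /\ invariant [:: A; B] U) /\
     ((exists (P : 'M[R]_4) (A3 B3 : 'M[R]_3),
         [/\ \det P = 1, rep_SL A3 B3, semisimple [:: A3; B3],
             P *m A *m invmx P = incl_i A3 & P *m B *m invmx P = incl_i B3])
      \/
      (exists (P : 'M[R]_4) (A1 B1 A2 B2 : 'M[R]_2),
         [/\ \det P = 1, rep_SL A1 B1 /\ semisimple [:: A1; B1],
             rep_SL A2 B2 /\ semisimple [:: A2; B2],
             P *m A *m invmx P = incl_j A1 A2 & P *m B *m invmx P = incl_j B1 B2])))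
  /\
  (forall A3 B3 : 'M[R]_3, rep_SL A3 B3 -> semisimple [:: A3; B3] ->
     rep_SL (incl_i A3) (incl_i B3) /\ semisimple [:: incl_i A3; incl_i B3])
  /\
  (forall A1 B1 A2 B2 : 'M[R]_2,
     rep_SL A1 B1 -> semisimple [:: A1; B1] ->
     rep_SL A2 B2 -> semisimple [:: A2; B2] ->
     rep_SL (incl_j A1 A2) (incl_j B1 B2) /\
     semisimple [:: incl_j A1 A2; incl_j B1 B2]).
Proof.
split; [|split].
- move=> A B repAB ssAB.
  have [U [V [invU invV sumUV [[rankU rankV]|[rankU rankV]]]]] := invariant_complements4 repAB ssAB.
    split; first by exists U; split; first left.
    by left; apply: conj_incl_i repAB ssAB invU invV sumUV rankU rankV.
  split; first by exists U; split; first right.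
  by right; apply: conj_incl_j repAB ssAB invU invV sumUV rankU rankV.
- move=> A3 B3 repAB ssAB; rewrite /incl_i; split.
    by apply/(@rep_SL_block_diagE _ 3 1); split; last exact: rep_SL1.
  exact: semisimple_block_diag ssAB (@semisimple_id _ 1).
- move=> A1 B1 A2 B2 repAB1 ssAB1 repAB2 ssAB2; rewrite /incl_j; split.
    exact/(@rep_SL_block_diagE _ 2 2).
  exact: semisimple_block_diag ssAB1 ssAB2.
Qed.
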